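(* Let $A=\{0,1,2\}$, let $T\colon A^4\to A$ be given by $T(1,1,2,2)=T(1,2,1,2)=1$ and $T(\mathbf{x})=0$ for all other $\mathbf{x}\in A^4$, and let $f\colon A^2\to A$ be given by $f(x,y)=1$ if $\{x,y\}=\{1,2\}$ and $f(x,y)=0$ otherwise. Then $f\in\{T\}^{**}$, and the graph of $f$ is primitive positively definable from the graph of $T$: \[\{(x_2,x_3,x_5)\in A^3: f(x_2,x_3)=x_5\}=\Bigl\{(x_2,x_3,x_5)\in A^3:\exists x_1,x_4\in A\colon T(x_1,x_2,x_3,x_4)=x_5\wedge T(x_2,x_3,x_2,x_3)=T(x_1,x_2,x_4,x_3)\wedge T(x_3,x_2,x_3,x_2)=T(x_1,x_3,x_4,x_2)\Bigr\},\] which also equals $\{(x_2,x_3,x_5)\in A^3:\exists x_1,x_4,u,v\in A\colon T(x_1,x_2,x_3,x_4)=x_5\wedge T(x_2,x_3,x_2,x_3)=u\wedge T(x_1,x_2,x_4,x_3)=u\wedge T(x_3,x_2,x_3,x_2)=v\wedge T(x_1,x_3,x_4,x_2)=v\}$.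
   Context: An $m$-ary $g$ commutes with an $n$-ary $h$ if $g\bigl((h((x_{ij})_{j}))_{i}\bigr)=h\bigl((g((x_{ij})_{i}))_{j}\bigr)$ for all $(x_{ij})\in A^{m\times n}$. For a set $F$ of finitary operations on $A$ (positive arity), $F^*$ is the set of all such operations commuting with every member of $F$, and $F^{**}=(F^* )^*$. *)

From mathcomp Require Import all_boot.
Set Implicit Arguments. Unset Strict Implicit. Unset Printing Implicit Defensive.

Definition operation (A : Type) (n : nat) := ('I_n -> A) -> A.

Definition fop (A : Type) := {n : nat & operation A n}.

Definition commutes (A : Type) (m n : nat) (g : operation A m) (h : operation A n) :=
  forall x : 'I_m -> 'I_n -> A,
    g (fun i => h (fun j => x i j)) = h (fun j => g (fun i => x i j)).

Definition centralizer (A : Type) (F : fop A -> Prop) : fop A -> Prop :=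
  fun p => 0 < projT1 p /\ forall q, F q -> commutes (projT2 p) (projT2 q).

Definition bicentralizer (A : Type) (F : fop A -> Prop) := centralizer (centralizer F).

Notation A3 := 'I_3.
Definition a0 : A3 := inord 0.
Definition a1 : A3 := inord 1.
Definition a2 : A3 := inord 2.

Definition tup2 (a b : A3) : 'I_2 -> A3 := fun i => nth a [:: a; b] i.
Definition tup4 (a b c d : A3) : 'I_4 -> A3 := fun i => nth a [:: a; b; c; d] i.

Definition T : operation A3 4 := fun x =>
  if ([&& x (inord 0) == a1, x (inord 1) == a1, x (inord 2) == a2 & x (inord 3) == a2]
      || [&& x (inord 0) == a1, x (inord 1) == a2, x (inord 2) == a1 & x (inord 3) == a2])
  then a1 else a0.

Definition f : operation A3 2 := fun x =>
  if ((x (inord 0) == a1) && (x (inord 1) == a2)) || ((x (inord 0) == a2) && (x (inord 1) == a1))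
  then a1 else a0.

From mathcomp Require Import all_boot.
From Stdlib Require Import FunctionalExtensionality.

Set Implicit Arguments.
Unset Strict Implicit.
Unset Printing Implicit Defensive.

(* An m-ary g commutes with h exactly when g, applied coordinatewise, preserves
   the graph of h.  Operations commuting with T preserve every relation that
   is primitive positively definable from T, so it suffices to exhibit such a
   definition of the graph of f; over the three-element carrier this is an
   exhaustive finite check. *)

Section PreservedGraphDefinition.

Variables (A : Type) (m n k : nat) (g : operation A m) (h : operation A n).
Variable R : ('I_k -> A) -> ('I_n -> A) -> A -> Prop.

Hypothesis graph_def : forall y z, h y = z <-> exists w, R w y z.
Hypothesis g_preserves_R :
  forall (w : 'I_m -> 'I_k -> A) (y : 'I_m -> 'I_n -> A) (z : 'I_m -> A),
    (forall i, R (w i) (y i) (z i)) ->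
    R (fun l => g (fun i => w i l)) (fun j => g (fun i => y i j)) (g z).

Lemma commutes_of_preserved_graph_def : commutes h g.
Proof.
move=> x; apply/graph_def.
have [w Rw] := fin_all_exists (fun i => (graph_def (fun j => x j i) _).1 erefl).
by exists (fun l => g (fun i => w i l)); apply: g_preserves_R.
Qed.

End PreservedGraphDefinition.

Lemma tup2_eta (x : 'I_2 -> A3) : tup2 (x ord0) (x ord_max) = x.
Proof.
by apply: functional_extensionality => -[[|[|//]] i_lt2]; congr x; apply: val_inj.
Qed.

Lemma commutes_T_tup4 m (g : operation A3 m) : commutes g T ->
  forall a b c d : 'I_m -> A3,
    g (fun i => T (tup4 (a i) (b i) (c i) (d i))) = T (tup4 (g a) (g b) (g c) (g d)).
Proof.
move=> gT a b c d; rewrite (gT (fun i => tup4 (a i) (b i) (c i) (d i))); congr T.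
by apply: functional_extensionality => -[[|[|[|[|//]]]] j_lt4].
Qed.

Definition f_pp_def (x1 x2 x3 x4 x5 : A3) : Prop :=
  [/\ T (tup4 x1 x2 x3 x4) = x5,
      T (tup4 x2 x3 x2 x3) = T (tup4 x1 x2 x4 x3) &
      T (tup4 x3 x2 x3 x2) = T (tup4 x1 x3 x4 x2)].

Lemma f_pp_defP x1 x2 x3 x4 x5 :
  reflect (f_pp_def x1 x2 x3 x4 x5)
          [&& T (tup4 x1 x2 x3 x4) == x5,
              T (tup4 x2 x3 x2 x3) == T (tup4 x1 x2 x4 x3) &
              T (tup4 x3 x2 x3 x2) == T (tup4 x1 x3 x4 x2)].
Proof. by apply: (iffP and3P) => -[/eqP e1 /eqP e2 /eqP e3]. Qed.

Lemma commutes_T_preserves_f_pp_def m (g : operation A3 m) (x1 x2 x3 x4 x5 : 'I_m -> A3) :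
  commutes g T -> (forall i, f_pp_def (x1 i) (x2 i) (x3 i) (x4 i) (x5 i)) ->
  f_pp_def (g x1) (g x2) (g x3) (g x4) (g x5).
Proof.
move=> gT def_x; have gTE := commutes_T_tup4 gT.
have gE (y z : 'I_m -> A3) : (forall i, y i = z i) -> g y = g z.
  by move=> /functional_extensionality ->.
by split; rewrite -!gTE; apply: gE => i; case: (def_x i).
Qed.

Lemma inord_Ordinal n k (lt_k_n : k < n.+1) : inord k = Ordinal lt_k_n.
Proof. by apply: val_inj; rewrite /= inordK. Qed.

Definition enumA3 : seq A3 := [:: a0; a1; a2].

Lemma mem_enumA3 (x : A3) : x \in enumA3.
Proof.
by rewrite /enumA3 /a0 /a1 /a2 !inord_Ordinal; case: x => [[|[|[|//]]] x_lt3].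
Qed.

(* [inord] is defined through the opaque [idP], so it is rewritten away before
   the finite check can be evaluated. *)
Lemma f_graph_pp_check :
  all (fun x2 => all (fun x3 => all (fun x5 =>
    (f (tup2 x2 x3) == x5) ==
    has (fun x1 => has (fun x4 =>
      [&& T (tup4 x1 x2 x3 x4) == x5,
          T (tup4 x2 x3 x2 x3) == T (tup4 x1 x2 x4 x3) &
          T (tup4 x3 x2 x3 x2) == T (tup4 x1 x3 x4 x2)]) enumA3) enumA3)
    enumA3) enumA3) enumA3.
Proof.
by rewrite /enumA3 /f /T /tup2 /tup4 /a0 /a1 /a2 !inord_Ordinal; vm_compute.
Qed.

Lemma f_graph_pp x2 x3 x5 :
  f (tup2 x2 x3) = x5 <-> exists x1 x4, f_pp_def x1 x2 x3 x4 x5.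
Proof.
have /allP/(_ x2 (mem_enumA3 _))/allP/(_ x3 (mem_enumA3 _))/allP/(_ x5 (mem_enumA3 _))
     /eqP check := f_graph_pp_check.
split=> [/eqP | [x1 [x4 /f_pp_defP pp_x]]].
  by rewrite check => /hasP[x1 _ /hasP[x4 _ /f_pp_defP pp_x]]; exists x1, x4.
apply/eqP; rewrite check; apply/hasP; exists x1; first exact: mem_enumA3.
by apply/hasP; exists x4; first exact: mem_enumA3.
Qed.

Lemma f_commutes_of_commutes_T m (g : operation A3 m) : commutes g T -> commutes f g.
Proof.
move=> gT; apply: (@commutes_of_preserved_graph_def _ _ _ 2 g f
  (fun w y z => f_pp_def (w ord0) (y ord0) (y ord_max) (w ord_max) z)).
- move=> y z; rewrite -{1}[y]tup2_eta; apply: iff_trans (f_graph_pp _ _ _) _.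
  split=> [[x1 [x4 pp_x]] | [w pp_w]]; first by exists (tup2 x1 x4).
  by exists (w ord0), (w ord_max).
- by move=> w y z pp_wyz; apply: commutes_T_preserves_f_pp_def.
Qed.

Theorem lemma3p12 :
  bicentralizer (fun q : fop A3 => q = existT _ 4 T) (existT _ 2 f) /\
  (forall x2 x3 x5 : A3,
     f (tup2 x2 x3) = x5 <->
     exists x1 x4 : A3,
       [/\ T (tup4 x1 x2 x3 x4) = x5,
           T (tup4 x2 x3 x2 x3) = T (tup4 x1 x2 x4 x3) &
           T (tup4 x3 x2 x3 x2) = T (tup4 x1 x3 x4 x2)]) /\
  (forall x2 x3 x5 : A3,
     f (tup2 x2 x3) = x5 <->
     exists x1 x4 u v : A3,
       [/\ T (tup4 x1 x2 x3 x4) = x5,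
           T (tup4 x2 x3 x2 x3) = u, T (tup4 x1 x2 x4 x3) = u,
           T (tup4 x3 x2 x3 x2) = v & T (tup4 x1 x3 x4 x2) = v]).
Proof.
split; [|split].
- split=> // -[m g] [_ centralizes_T].
  exact/f_commutes_of_commutes_T/(centralizes_T _ erefl).
- exact: f_graph_pp.
- move=> x2 x3 x5; apply: iff_trans (f_graph_pp _ _ _) _.
  split=> [[x1 [x4 [pp1 pp2 pp3]]] | [x1 [x4 [u [v [eq1 eq2 eq3 eq4 eq5]]]]]].
    by exists x1, x4, (T (tup4 x2 x3 x2 x3)), (T (tup4 x3 x2 x3 x2)).
  by exists x1, x4; split; congruence.
Qed.
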